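(* For each $t\in\{0,1,\dots,T\}$ and $i\in\{1,\dots,N\}$, the function $(x,k)\mapsto\tilde V^{N,i}_t(x,k)$ on $\mathbb{N}_0^2$ is (i) non-decreasing in $x$ for each fixed $k$, and (ii) non-decreasing in $k$ for each fixed $x$.
   Context: Fix integers $N\ge1$, $T\ge1$, reals $\alpha_0,\beta_0>0$, and for each $i\in\{1,\dots,N\}$ an integer failure threshold $\xi_i\ge1$ and costs $0<c_p^i<c_u^i$. $\mathbb{N}_0=\{0,1,2,\dots\}$. For real $r>0$ and $p\in(0,1)$, $NB(r,p)$ is the distribution on $\mathbb{N}_0$ with $P(n)=\frac{\Gamma(n+r)}{\Gamma(r)n!}p^r(1-p)^n$; $NB(0,p)$ is the point mass at $0$. For $t\in\{0,\dots,T\}$ let $p_t=\frac{\beta_0+Nt}{\beta_0+Nt+1}$. Let $\mathbb{I}_i(x)=1$ if $x\ge\xi_i$, else $0$; $\mathcal{A}_i(x)=\{0,1\}$ if $x<\xi_i$ and $\{1\}$ if $x\ge\xi_i$ ($a=1$: replacement); $C_i(x,a)=a(1-\mathbb{I}_i(x))c_p^i+\mathbb{I}_i(x)c_u^i$. Define $\tilde V^{N,i}_T(x,k)=\mathbb{I}_i(x)c_u^i$ and for $t=T-1,\dots,0$: $\tilde V^{N,i}_t(x,k)=\min_{a\in\mathcal{A}_i(x)}\{C_i(x,a)+\mathbb{E}[\tilde V^{N,i}_{t+1}(x(1-a)+Z,\;k+Z+K)]\}$, where $Z\sim NB(\alpha_0+k,p_t)$ and $K\sim NB((N-1)(\alpha_0+k),p_t)$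 are independent. *)

From Stdlib Require Import Reals.
From Coquelicot Require Import Coquelicot.
Open Scope R_scope.

(* rising factorial r (r+1) ... (r+n-1) = Gamma(n+r)/Gamma(r); equals 1 for n=0,
   and for r = 0 it is 0 for every n >= 1 (so NB(0,p) is the point mass at 0). *)
Fixpoint rising (r : R) (n : nat) : R :=
  match n with
  | O => 1
  | S m => rising r m * (r + INR m)
  end.

Definition nb_pmf (r p : R) (n : nat) : R :=
  rising r n / INR (Factorial.fact n) * Rpower p r * (1 - p) ^ n.

Definition p_t (beta0 : R) (N t : nat) : R :=
  (beta0 + INR N * INR t) / (beta0 + INR N * INR t + 1).

Definition ind (xi x : nat) : R := if Nat.leb xi x then 1 else 0.

Definition cost (xi : nat) (cp cu : R) (x a : nat) : R :=
  INR a * (1 - ind xi x) * cp + ind xi x * cu.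

Definition expect2 (r1 r2 p : R) (f : nat -> nat -> R) : R :=
  Series (fun z => Series (fun m => nb_pmf r1 p z * nb_pmf r2 p m * f z m)).

(* Vrec j = value function at time t = T - j (j periods to go). *)
Fixpoint Vrec (N T : nat) (alpha0 beta0 : R) (xi : nat) (cp cu : R)
    (j : nat) : nat -> nat -> R :=
  match j with
  | O => fun x k => ind xi x * cu
  | S j' =>
      fun x k =>
        let t := (T - S j')%nat in
        let p := p_t beta0 N t in
        let r1 := alpha0 + INR k in
        let r2 := (INR N - 1) * (alpha0 + INR k) in
        let Q := fun a : nat =>
          cost xi cp cu x a +
          expect2 r1 r2 p
            (fun z m => Vrec N T alpha0 beta0 xi cp cu j'
                          (x * (1 - a) + z)%nat (k + z + m)%nat) in
        (* A_i(x) = {0,1} if x < xi, {1} otherwise *)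
        if Nat.ltb x xi then Rmin (Q 0%nat) (Q 1%nat) else Q 1%nat
  end.

Definition Vtilde (N T : nat) (alpha0 beta0 : R) (xi : nat) (cp cu : R)
    (t x k : nat) : R :=
  Vrec N T alpha0 beta0 xi cp cu (T - t) x k.

From Pilot Require Import Defs.
From Stdlib Require Import Reals Lra Lia.
From Coquelicot Require Import Coquelicot.
Open Scope R_scope.

(* The proof is a backward induction on the number j of periods to go, with
   the invariant that Vrec j is bounded and nondecreasing in both the state x
   and the information index k (the predicate monotone2).  Boundedness is
   needed only to make every expectation a convergent series.

   The probabilistic input is the shape recursion of the negative binomial
   law: NB(r+1,p) is NB(r,p) plus an independent geometric variable, i.e.
     pmf_{r+1}(0) = p pmf_r(0),
     pmf_{r+1}(n+1) = p pmf_r(n+1) + (1-p) pmf_{r+1}(n).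
   Hence NB(r+1,p) stochastically dominates NB(r,p) (nb_mean_shape_mono) and
   the total mass is invariant under integer shifts of the shape
   (nb_mass_shift), which gives a bound on the continuation uniform in k.

   Monotonicity in x holds because the one-period cost is nondecreasing in x
   and the continuation of "keep" is nondecreasing in x, while the
   continuation of "replace" does not depend on x.  Monotonicity in k holds
   because raising k to k+1 increases the integrand and increases both shapes
   of (Z,K) by integers, which by stochastic dominance increases the
   expectation of a nondecreasing function. *)

Lemma rising_nonneg r n : 0 <= r -> 0 <= rising r n.
Proof.
  intros Hr; induction n as [|n IH]; simpl; [lra|].
  apply Rmult_le_pos; [exact IH|]. pose proof (pos_INR n); lra.
Qed.

Lemma rising_pos r n : 0 < r -> 0 < rising r n.
Proof.
  intros Hr; induction n as [|n IH]; simpl; [lra|].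
  apply Rmult_lt_0_compat; [exact IH|]. pose proof (pos_INR n); lra.
Qed.

Lemma rising_succ_shape r n : rising r (S n) = r * rising (r + 1) n.
Proof.
  induction n as [|n IH]; [simpl; ring|].
  change (rising r (S (S n))) with (rising r (S n) * (r + INR (S n))).
  rewrite IH, S_INR. simpl. ring.
Qed.

Lemma fact_INR_pos n : 0 < INR (Factorial.fact n).
Proof. apply lt_0_INR, Factorial.lt_O_fact. Qed.

Lemma Series_nonneg (a : nat -> R) :
  (forall n, 0 <= a n) -> ex_series a -> 0 <= Series a.
Proof.
  intros Ha Hex.
  assert (Hzero : Series (fun _ => 0) = 0).
  { transitivity (Series (fun _ : nat => 0 * 0)); [apply Series_ext; intros; ring|].
    rewrite Series_scal_l. ring. }
  rewrite <- Hzero. apply Series_le; [intros n; split; [lra|apply Ha]|exact Hex].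
Qed.

Section NegativeBinomial.
Variables (p : R) (Hp : 0 < p < 1).

Lemma nb_pmf_nonneg r n : 0 <= r -> 0 <= nb_pmf r p n.
Proof.
  intros Hr. unfold nb_pmf, Rdiv.
  pose proof (rising_nonneg r n Hr). pose proof (fact_INR_pos n).
  pose proof (exp_pos (r * ln p)). pose proof (pow_le (1 - p) n ltac:(lra)).
  assert (0 <= / INR (Factorial.fact n)) by (left; apply Rinv_0_lt_compat; lra).
  unfold Rpower. repeat apply Rmult_le_pos; lra.
Qed.

Lemma nb_pmf_pos r n : 0 < r -> 0 < nb_pmf r p n.
Proof.
  intros Hr. unfold nb_pmf, Rdiv.
  pose proof (rising_pos r n Hr). pose proof (fact_INR_pos n).
  pose proof (exp_pos (r * ln p)). pose proof (pow_lt (1 - p) n ltac:(lra)).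
  assert (0 < / INR (Factorial.fact n)) by (apply Rinv_0_lt_compat; lra).
  unfold Rpower. repeat apply Rmult_lt_0_compat; lra.
Qed.

Lemma nb_pmf_succ r n :
  nb_pmf r p (S n) = nb_pmf r p n * ((r + INR n) / INR (S n) * (1 - p)).
Proof.
  unfold nb_pmf. pose proof (fact_INR_pos n). pose proof (lt_0_INR (S n) ltac:(lia)).
  change (rising r (S n)) with (rising r n * (r + INR n)).
  change (Factorial.fact (S n)) with (S n * Factorial.fact n)%nat.
  rewrite mult_INR. simpl pow. field. lra.
Qed.

(* The pmf is summable: by d'Alembert's ratio test (ratio -> 1-p) when r > 0,
   and because NB(0,p) is the point mass at 0 when r = 0. *)
Lemma nb_pmf_summable r : 0 <= r -> ex_series (nb_pmf r p).
Proof.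
  intros [Hr|<-].
  - apply ex_series_Rabs, ex_series_DAlembert with (k := 1 - p); [lra| |].
    + intros n. apply Rgt_not_eq, nb_pmf_pos, Hr.
    + apply is_lim_seq_ext with (u := fun n => (1 + (r - 1) * / INR (S n)) * (1 - p)).
      * intros n. pose proof (nb_pmf_pos r n Hr). pose proof (pos_INR n).
        pose proof (lt_0_INR (S n) ltac:(lia)).
        assert (Hratio : nb_pmf r p (S n) / nb_pmf r p n = (r + INR n) / INR (S n) * (1 - p))
          by (rewrite nb_pmf_succ; field; lra).
        rewrite Hratio, Rabs_right.
        -- rewrite S_INR. field. lra.
        -- apply Rle_ge, Rmult_le_pos; [|lra].
           apply Rmult_le_pos; [lra|left; apply Rinv_0_lt_compat; lra].
      * replace (Finite (1 - p)) with (Finite ((1 + (r - 1) * 0) * (1 - p))) by (f_equal; ring).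
        apply is_lim_seq_mult'; [|apply is_lim_seq_const].
        apply is_lim_seq_plus'; [apply is_lim_seq_const|].
        apply is_lim_seq_mult'; [apply is_lim_seq_const|].
        change (Finite 0) with (Rbar_inv p_infty).
        apply is_lim_seq_inv; [|discriminate].
        apply (is_lim_seq_incr_1 INR p_infty), is_lim_seq_INR.
  - apply (ex_series_le (V := R_CompleteNormedModule)) with (b := fun n => (1 - p) ^ n).
    + intros n. change (norm (nb_pmf 0 p n)) with (Rabs (nb_pmf 0 p n)).
      rewrite Rabs_right by (apply Rle_ge, nb_pmf_nonneg; lra).
      unfold nb_pmf. rewrite Rpower_O by lra.
      destruct n as [|n]; [simpl; lra|].
      rewrite rising_succ_shape. unfold Rdiv. rewrite !Rmult_0_l. apply pow_le; lra.
    + exists (/ (1 - (1 - p))). apply is_series_geom. rewrite Rabs_right; lra.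
Qed.

(* Shape recursion: NB(r+1,p) is the law of X + G with X ~ NB(r,p) and G an
   independent geometric variable. *)
Lemma nb_pmf_shape_zero r : nb_pmf (r + 1) p 0 = p * nb_pmf r p 0.
Proof. unfold nb_pmf. rewrite Rpower_plus, Rpower_1 by lra. simpl. field. Qed.

Lemma nb_pmf_shape_succ r n :
  nb_pmf (r + 1) p (S n) = p * nb_pmf r p (S n) + (1 - p) * nb_pmf (r + 1) p n.
Proof.
  unfold nb_pmf. rewrite Rpower_plus, Rpower_1 by lra.
  rewrite (rising_succ_shape r n).
  change (rising (r + 1) (S n)) with (rising (r + 1) n * (r + 1 + INR n)).
  change (Factorial.fact (S n)) with (S n * Factorial.fact n)%nat.
  pose proof (fact_INR_pos n). pose proof (lt_0_INR (S n) ltac:(lia)).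
  rewrite mult_INR, S_INR in *. simpl pow. field. lra.
Qed.

(* Expectations E_r[g] of bounded nonnegative functions g under NB(r,p), and
   the total mass of NB(r,p) (which is 1, but only its shift invariance is
   needed). *)
Definition bounded_by (B : R) (g : nat -> R) : Prop := forall n, 0 <= g n <= B.

Definition nb_mean (r : R) (g : nat -> R) : R := Series (fun n => nb_pmf r p n * g n).

Definition nb_mass (r : R) : R := Series (nb_pmf r p).

Lemma nb_weighted_summable r B g :
  0 <= r -> bounded_by B g -> ex_series (fun n => nb_pmf r p n * g n).
Proof.
  intros Hr Hg. apply (ex_series_le (V := R_CompleteNormedModule)) with (b := fun n => B * nb_pmf r p n).
  - intros n. change (norm (nb_pmf r p n * g n)) with (Rabs (nb_pmf r p n * g n)).
    pose proof (nb_pmf_nonneg r n Hr). specialize (Hg n).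
    rewrite Rabs_right by (apply Rle_ge, Rmult_le_pos; lra).
    rewrite Rmult_comm. apply Rmult_le_compat_r; lra.
  - apply (ex_series_scal_l B (nb_pmf r p)), nb_pmf_summable, Hr.
Qed.

Lemma nb_mean_mono r B g g' :
  0 <= r -> (forall n, 0 <= g n <= g' n) -> bounded_by B g' -> nb_mean r g <= nb_mean r g'.
Proof.
  intros Hr Hgg' Hg'. apply Series_le; [|apply (nb_weighted_summable r B); auto].
  intros n. pose proof (nb_pmf_nonneg r n Hr). specialize (Hgg' n).
  split; [apply Rmult_le_pos|apply Rmult_le_compat_l]; lra.
Qed.

Lemma nb_mean_bounds r B g :
  0 <= r -> bounded_by B g -> 0 <= nb_mean r g <= B * nb_mass r.
Proof.
  intros Hr Hg. split.
  - apply Series_nonneg; [|apply (nb_weighted_summable r B); auto].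
    intros n. pose proof (nb_pmf_nonneg r n Hr). specialize (Hg n). apply Rmult_le_pos; lra.
  - unfold nb_mass. rewrite Rmult_comm, <- Series_scal_r.
    apply (nb_mean_mono r B g (fun _ => B)); auto.
    intros n. specialize (Hg n). split; lra.
Qed.

Lemma nb_mean_shape_step r B g : 0 <= r -> bounded_by B g ->
  nb_mean (r + 1) g = p * nb_mean r g + (1 - p) * nb_mean (r + 1) (fun n => g (S n)).
Proof.
  intros Hr Hg.
  assert (Hr1 : 0 <= r + 1) by lra.
  assert (Hg1 : bounded_by B (fun n => g (S n))) by (intros n; apply Hg).
  pose proof (nb_weighted_summable (r + 1) B g Hr1 Hg) as Hsum1.
  pose proof (nb_weighted_summable r B g Hr Hg) as Hsum.
  pose proof (nb_weighted_summable (r + 1) B _ Hr1 Hg1) as Hsum1S.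
  apply ex_series_incr_1 in Hsum as HsumS.
  unfold nb_mean. rewrite (Series_incr_1 _ Hsum1), (Series_incr_1 _ Hsum).
  rewrite (Series_ext _ (fun n => p * (nb_pmf r p (S n) * g (S n))
                                  + (1 - p) * (nb_pmf (r + 1) p n * g (S n))))
    by (intros n; rewrite nb_pmf_shape_succ; ring).
  rewrite Series_plus by
    first [exact (ex_series_scal_l p _ HsumS) | exact (ex_series_scal_l (1 - p) _ Hsum1S)].
  rewrite !Series_scal_l, nb_pmf_shape_zero. ring.
Qed.

(* Taking g = 1: the mass does not change when the shape grows by 1. *)
Lemma nb_mass_shape_step r : 0 <= r -> nb_mass (r + 1) = nb_mass r.
Proof.
  intros Hr.
  assert (Hmass : forall s, nb_mean s (fun _ => 1) = nb_mass s)
    by (intros s; apply Series_ext; intros; ring).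
  pose proof (nb_mean_shape_step r 1 (fun _ => 1) Hr ltac:(intros n; lra)) as Hstep.
  rewrite !Hmass in Hstep.
  apply (Rmult_eq_reg_l p); lra.
Qed.

Lemma nb_mass_shift r n : 0 <= r -> nb_mass (r + INR n) = nb_mass r.
Proof.
  intros Hr. induction n as [|n IH]; [simpl; rewrite Rplus_0_r; reflexivity|].
  pose proof (pos_INR n).
  rewrite S_INR, <- Rplus_assoc, nb_mass_shape_step by lra. exact IH.
Qed.

Lemma nb_mean_shape_mono r B g n : 0 <= r -> bounded_by B g -> (forall m, g m <= g (S m)) ->
  nb_mean r g <= nb_mean (r + INR n) g.
Proof.
  intros Hr Hg Hinc. induction n as [|n IH]; [simpl; rewrite Rplus_0_r; lra|].
  pose proof (pos_INR n). set (s := r + INR n) in IH.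
  assert (Hs : 0 <= s) by (unfold s; lra).
  rewrite S_INR, <- Rplus_assoc. fold s.
  assert (Hshift : nb_mean (s + 1) g <= nb_mean (s + 1) (fun m => g (S m))).
  { apply (nb_mean_mono (s + 1) B); [lra| |intros m; apply Hg].
    intros m. split; [apply Hg|apply Hinc]. }
  pose proof (nb_mean_shape_step s B g Hs Hg). nra.
Qed.

Definition bounded2_by (B : R) (f : nat -> nat -> R) : Prop := forall z m, 0 <= f z m <= B.

Lemma expect2_iterated r1 r2 f :
  expect2 r1 r2 p f = nb_mean r1 (fun z => nb_mean r2 (f z)).
Proof.
  unfold expect2, nb_mean. apply Series_ext. intros z.
  rewrite <- Series_scal_l. apply Series_ext. intros m. ring.
Qed.

Lemma expect2_bounds r1 r2 B f : 0 <= r1 -> 0 <= r2 -> bounded2_by B f ->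
  0 <= expect2 r1 r2 p f <= B * nb_mass r2 * nb_mass r1.
Proof.
  intros Hr1 Hr2 Hf. rewrite expect2_iterated.
  apply nb_mean_bounds; [exact Hr1|]. intros z. apply nb_mean_bounds; [exact Hr2|intros m; apply Hf].
Qed.

Lemma expect2_mono r1 r2 B f f' : 0 <= r1 -> 0 <= r2 ->
  (forall z m, 0 <= f z m <= f' z m) -> bounded2_by B f' ->
  expect2 r1 r2 p f <= expect2 r1 r2 p f'.
Proof.
  intros Hr1 Hr2 Hff' Hf'.
  assert (Hf : forall z, bounded_by B (f z)) by (intros z m; specialize (Hff' z m); specialize (Hf' z m); lra).
  rewrite !expect2_iterated. apply (nb_mean_mono r1 (B * nb_mass r2)); [exact Hr1| |].
  - intros z. split; [apply (nb_mean_bounds r2 B); auto|].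
    apply (nb_mean_mono r2 B); auto. intros m; apply Hf'.
  - intros z. apply nb_mean_bounds; auto. intros m; apply Hf'.
Qed.

Lemma expect2_shape_mono r1 r2 B f n1 n2 : 0 <= r1 -> 0 <= r2 -> bounded2_by B f ->
  (forall z m, f z m <= f (S z) m) -> (forall z m, f z m <= f z (S m)) ->
  expect2 r1 r2 p f <= expect2 (r1 + INR n1) (r2 + INR n2) p f.
Proof.
  intros Hr1 Hr2 Hf2 Hz Hm. rewrite !expect2_iterated.
  assert (Hf : forall z, bounded_by B (f z)) by (intros z m; apply Hf2).
  pose proof (pos_INR n1). pose proof (pos_INR n2).
  apply Rle_trans with (nb_mean (r1 + INR n1) (fun z => nb_mean r2 (f z))).
  - apply (nb_mean_shape_mono r1 (B * nb_mass r2)); [exact Hr1| |].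
    + intros z. apply nb_mean_bounds; auto.
    + intros z. apply (nb_mean_mono r2 B); auto.
      intros m. split; [apply Hf|apply Hz].
  - apply (nb_mean_mono _ (B * nb_mass (r2 + INR n2))); [lra| |].
    + intros z. split; [apply (nb_mean_bounds r2 B); auto|].
      apply (nb_mean_shape_mono r2 B); auto.
    + intros z. apply nb_mean_bounds; [lra|apply Hf].
Qed.
End NegativeBinomial.

Definition monotone2 (v : nat -> nat -> R) : Prop :=
  forall x x' k k', (x <= x')%nat -> (k <= k')%nat -> v x k <= v x' k'.

Lemma monotone2_intro (v : nat -> nat -> R) :
  (forall x x' k, (x <= x')%nat -> v x k <= v x' k) ->
  (forall x k, v x k <= v x (S k)) -> monotone2 v.
Proof.
  intros Hx Hk x x' k k' Hxx' Hkk'.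
  apply Rle_trans with (v x' k); [apply Hx, Hxx'|].
  induction Hkk' as [|k' _ IH]; [lra|]. eapply Rle_trans; [exact IH|apply Hk].
Qed.

Lemma p_t_bounds beta0 N t : 0 < beta0 -> 0 < p_t beta0 N t < 1.
Proof.
  intros Hb. unfold p_t. pose proof (pos_INR N). pose proof (pos_INR t).
  assert (0 < beta0 + INR N * INR t) by nra.
  split; [apply Rdiv_lt_0_compat; lra|].
  apply (Rmult_lt_reg_r (beta0 + INR N * INR t + 1)); [lra|].
  unfold Rdiv. rewrite Rmult_assoc, Rinv_l by lra. lra.
Qed.

(* The parameters of one component i; only 0 <= cp <= cu is used of the
   cost hypothesis, and alpha0 >= 0 of the prior. *)
Section ValueFunction.
Variables (N T : nat) (alpha0 beta0 : R) (xi : nat) (cp cu : R).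
Hypotheses (HN : (1 <= N)%nat) (Ha : 0 <= alpha0) (Hb : 0 < beta0) (Hc : 0 <= cp <= cu).

Let V := Vrec N T alpha0 beta0 xi cp cu.

Lemma cost_bounds x a : (a <= 1)%nat -> 0 <= cost xi cp cu x a <= cu.
Proof.
  intros Ha1. unfold cost, Defs.ind.
  destruct a as [|[|a]]; [| |lia]; destruct (Nat.leb xi x); simpl; lra.
Qed.

(* The one-period cost is nondecreasing in the state, since cp <= cu. *)
Lemma cost_mono_state x x' a : (x <= x')%nat -> (a <= 1)%nat ->
  cost xi cp cu x a <= cost xi cp cu x' a.
Proof.
  intros Hxx' Ha1. unfold cost, Defs.ind.
  destruct (Nat.leb_spec xi x), (Nat.leb_spec xi x'); [| lia | |];
    destruct a as [|[|a]]; try lia; simpl; lra.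
Qed.

Definition continuation (j a x k : nat) : R :=
  expect2 (alpha0 + INR k) ((INR N - 1) * (alpha0 + INR k)) (p_t beta0 N (T - S j))
    (fun z m => V j (x * (1 - a) + z)%nat (k + z + m)%nat).

Definition action_value (j a x k : nat) : R := cost xi cp cu x a + continuation j a x k.

Lemma Vrec_succ j x k :
  V (S j) x k = if Nat.ltb x xi then Rmin (action_value j 0 x k) (action_value j 1 x k)
                else action_value j 1 x k.
Proof. reflexivity. Qed.

Lemma shapes_nonneg k : 0 <= alpha0 + INR k /\ 0 <= (INR N - 1) * (alpha0 + INR k).
Proof.
  pose proof (pos_INR k). apply le_INR in HN. simpl in HN.
  split; [|apply Rmult_le_pos]; lra.
Qed.

Lemma shape2_succ k :
  (INR N - 1) * (alpha0 + INR (S k)) = (INR N - 1) * (alpha0 + INR k) + INR (N - 1).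
Proof. rewrite minus_INR, S_INR by lia. simpl. ring. Qed.

Lemma shape2_shift k :
  (INR N - 1) * (alpha0 + INR k) = (INR N - 1) * alpha0 + INR ((N - 1) * k).
Proof. rewrite mult_INR, minus_INR by lia. simpl. ring. Qed.

(* Product of the masses of the two shape families; it bounds the
   continuation uniformly in (x,k). *)
Definition mass_bound (j : nat) : R :=
  nb_mass (p_t beta0 N (T - S j)) ((INR N - 1) * alpha0) * nb_mass (p_t beta0 N (T - S j)) alpha0.

Section Step.
Variables (j : nat) (B : R).
Hypotheses (HVb : forall x k, 0 <= V j x k <= B) (HVm : monotone2 (V j)).

Let Hp : 0 < p_t beta0 N (T - S j) < 1 := p_t_bounds beta0 N (T - S j) Hb.

Lemma continuation_bounds a x k : 0 <= continuation j a x k <= B * mass_bound j.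
Proof.
  destruct (shapes_nonneg k) as [H1 H2]. unfold continuation, mass_bound.
  rewrite <- (nb_mass_shift _ Hp alpha0 k Ha).
  assert (Ha2 : 0 <= (INR N - 1) * alpha0)
    by (destruct (shapes_nonneg 0) as [_ H0]; simpl in H0; rewrite Rplus_0_r in H0; exact H0).
  rewrite <- (nb_mass_shift _ Hp _ ((N - 1) * k) Ha2), <- shape2_shift, <- Rmult_assoc.
  apply expect2_bounds; auto. intros z m; apply HVb.
Qed.

Lemma action_value_bounds a x k : (a <= 1)%nat ->
  0 <= action_value j a x k <= cu + B * mass_bound j.
Proof.
  intros Ha1. pose proof (cost_bounds x a Ha1). pose proof (continuation_bounds a x k).
  unfold action_value. lra.
Qed.

(* Q is nondecreasing in x: the cost is, and the integrand of the
   continuation is nondecreasing in x (it does not depend on x if a = 1). *)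
Lemma action_value_mono_state a x x' k : (a <= 1)%nat -> (x <= x')%nat ->
  action_value j a x k <= action_value j a x' k.
Proof.
  intros Ha1 Hxx'. destruct (shapes_nonneg k) as [H1 H2].
  apply Rplus_le_compat; [apply cost_mono_state; assumption|].
  apply (expect2_mono _ Hp _ _ B); auto.
  - intros z m. split; [apply HVb|apply HVm; nia].
  - intros z m. apply HVb.
Qed.

(* Q is nondecreasing in k: first increase the integrand from k to k+1, then
   increase both shapes by stochastic dominance. *)
Lemma action_value_mono_info a x k : action_value j a x k <= action_value j a x (S k).
Proof.
  destruct (shapes_nonneg k) as [H1 H2]. unfold action_value, continuation.
  apply Rplus_le_compat_l.
  set (f := fun z m => V j (x * (1 - a) + z)%nat (S k + z + m)%nat).
  apply Rle_trans with (expect2 (alpha0 + INR k) ((INR N - 1) * (alpha0 + INR k))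
                                (p_t beta0 N (T - S j)) f).
  - apply (expect2_mono _ Hp _ _ B); auto.
    + intros z m. split; [apply HVb|apply HVm; lia].
    + intros z m. apply HVb.
  - rewrite shape2_succ.
    replace (alpha0 + INR (S k)) with (alpha0 + INR k + INR 1)
      by (rewrite (S_INR k); change (INR 1) with 1; ring).
    apply (expect2_shape_mono _ Hp _ _ B); auto.
    + intros z m. apply HVb.
    + intros z m. apply HVm; lia.
    + intros z m. apply HVm; lia.
Qed.

Lemma value_succ_bounds x k : 0 <= V (S j) x k <= cu + B * mass_bound j.
Proof.
  rewrite Vrec_succ.
  pose proof (action_value_bounds 0 x k ltac:(lia)). pose proof (action_value_bounds 1 x k ltac:(lia)).
  destruct (Nat.ltb x xi); [|assumption].
  pose proof (Rmin_l (action_value j 0 x k) (action_value j 1 x k)).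
  split; [apply Rmin_glb|]; lra.
Qed.

(* For x < xi the value is min(Q 0, Q 1); crossing the threshold xi replaces
   the minimum by Q 1, which is still larger. *)
Lemma value_succ_monotone : monotone2 (V (S j)).
Proof.
  apply monotone2_intro.
  - intros x x' k Hxx'. rewrite !Vrec_succ.
    pose proof (action_value_mono_state 0 x x' k ltac:(lia) Hxx').
    pose proof (action_value_mono_state 1 x x' k ltac:(lia) Hxx').
    pose proof (Rmin_l (action_value j 0 x k) (action_value j 1 x k)).
    pose proof (Rmin_r (action_value j 0 x k) (action_value j 1 x k)).
    destruct (Nat.ltb_spec x xi), (Nat.ltb_spec x' xi); try lia.
    + apply Rmin_glb; lra.
    + lra.
    + lra.
  - intros x k. rewrite !Vrec_succ.
    pose proof (action_value_mono_info 0 x k). pose proof (action_value_mono_info 1 x k).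
    pose proof (Rmin_l (action_value j 0 x k) (action_value j 1 x k)).
    pose proof (Rmin_r (action_value j 0 x k) (action_value j 1 x k)).
    destruct (Nat.ltb x xi); [apply Rmin_glb|]; lra.
Qed.

End Step.

Lemma value_regular j : (exists B, forall x k, 0 <= V j x k <= B) /\ monotone2 (V j).
Proof.
  induction j as [|j [[B HVb] HVm]].
  - split.
    + exists cu. intros x k. unfold V; simpl. unfold Defs.ind. destruct (Nat.leb xi x); lra.
    + apply monotone2_intro; [|intros; unfold V; simpl; lra].
      intros x x' k Hxx'. unfold V; simpl. unfold Defs.ind.
      destruct (Nat.leb_spec xi x), (Nat.leb_spec xi x'); try lia; lra.
  - split.
    + exists (cu + B * mass_bound j). intros x k. apply value_succ_bounds; assumption.
    + apply value_succ_monotone with B; assumption.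
Qed.

End ValueFunction.

Theorem proposition1
  (N T : nat) (alpha0 beta0 : R)
  (xi : nat -> nat) (cp cu : nat -> R)
  (HN : (1 <= N)%nat) (HT : (1 <= T)%nat)
  (Ha : 0 < alpha0) (Hb : 0 < beta0)
  (Hxi : forall i, (1 <= i <= N)%nat -> (1 <= xi i)%nat)
  (Hc : forall i, (1 <= i <= N)%nat -> 0 < cp i < cu i) :
  forall (t i : nat), (t <= T)%nat -> (1 <= i <= N)%nat ->
    (forall x x' k : nat, (x <= x')%nat ->
       Vtilde N T alpha0 beta0 (xi i) (cp i) (cu i) t x k
       <= Vtilde N T alpha0 beta0 (xi i) (cp i) (cu i) t x' k) /\
    (forall x k k' : nat, (k <= k')%nat ->
       Vtilde N T alpha0 beta0 (xi i) (cp i) (cu i) t x k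
       <= Vtilde N T alpha0 beta0 (xi i) (cp i) (cu i) t x k').
Proof.
  intros t i _ Hi.
  assert (Hcost : 0 <= cp i <= cu i) by (specialize (Hc i Hi); lra).
  destruct (value_regular N T alpha0 beta0 (xi i) (cp i) (cu i) HN ltac:(lra) Hb Hcost (T - t))
    as [_ Hmono].
  unfold Vtilde. split; intros; apply Hmono; lia.
Qed.
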